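(* Let $f \colon \mathbb{R}^n \to \mathbb{R}$ and $g \colon \mathbb{R}^n \to \mathbb{R}^m$ be continuously differentiable, let $X \subseteq \mathbb{R}^m$ be nonempty and closed, let $\rho>0$, and let $p^\rho(y) = \sum_{i=1}^n p_i^\rho(y_i)$ where each $p_i^\rho$ satisfies (P.1)–(P.3) below. Let $(x^*,y^* )$ be a stationary point of (SPOref) such that SP-GMFCQ holds at $x^*$. Then there exist $\alpha^*>0$ and a neighborhood $U$ of $(x^*,y^* )$ such that, for all $\alpha\ge\alpha^*$, every stationary point of Pen$(\alpha)$ lying in $U$ is a stationary point of (SPOref).
   Context: Conditions on each $p_i^\rho\colon\mathbb{R}\to\mathbb{R}$: (P.1) convex with a unique minimizer $s_i^\rho>0$; (P.2) $p_i^\rho(0)-p_i^\rho(s_i^\rho)=\rho$; (P.3) continuously differentiable. Notation: $I_0(z)=\{i : z_i=0\}$, $|x| = (|x_1|,\dots,|x_n|)^T$, $\circ$ the componentwise product, $e_i$ the $i$-th unit vector, $g'(x)$ the Jacobian of $g$, $N^{\lim}_X$ the limiting (Mordukhovich) normal cone to $X$. (SPOref) is $\min_{x,y} f(x)+p^\rho(y)$ s.t. $g(x)\in X$, $x\circ y=0$, $y\ge0$. A feasible point $(x,y)$ of (SPOref) is stationary if there exist $\lambda\in N^{\lim}_X(g(x))$, reals $\gamma_i^x$ ($i\in I_0(x)$), $\gamma_i^y$ and $\nu_i\ge 0$ ($i\in I_0(y)$) with $0 = \nabla f(x) + g'(x)^T\lambda + \sum_{i\in I_0(x)} \gamma_i^x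 y_i e_i$ and $0 = \nabla p^\rho(y) + \sum_{i\in I_0(y)}(\gamma_i^y x_i - \nu_i) e_i$. Pen$(\alpha)$ is $\min_{x,y} f(x)+p^\rho(y)+\alpha|x|^Ty$ s.t. $g(x)\in X$, $y\ge 0$; a point $(x,y)$ is stationary for Pen$(\alpha)$ if $g(x)\in X$, $y\ge0$, and there exist $\lambda\in N^{\lim}_X(g(x))$ and $\gamma_i\ge 0$ ($i\in I_0(y)$) such that $0\in \nabla f(x) + \alpha\, y\circ\partial(|x|) + g'(x)^T\lambda$ and $0 = \nabla p^\rho(y) + \alpha|x| - \sum_{i\in I_0(y)}\gamma_i e_i$, where $y\circ\partial(|x|) = \{y\circ s : s_i = \operatorname{sign}(x_i) \text{ if } x_i\ne0,\ s_i\in[-1,1] \text{ if } x_i=0\}$. SP-GMFCQ holds at $x^*$ (with $g(x^* )\in X$) if there is no nonzero pair $(\lambda^a,\lambda^b)\in\mathbb{R}^{|I_0(x^* )|}\times N^{\lim}_X(g(x^* ))$ with $\sum_{i\in I_0(x^* )}\lambda^a_i e_i + g'(x^* )^T\lambda^b = 0$. *)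

From HB Require Import structures.
From mathcomp Require Import all_boot all_order all_algebra.
From mathcomp Require Import all_classical all_reals all_analysis.
Set Implicit Arguments. Unset Strict Implicit. Unset Printing Implicit Defensive.
Import Order.TTheory GRing.Theory Num.Theory.
Import numFieldNormedType.Exports.
Local Open Scope classical_set_scope.
Local Open Scope ring_scope.

Section SPO.
Variable R : realType.

Definition unitv (n : nat) (i : 'I_n) : 'rV[R]_n := delta_mx ord0 i.

Definition dotv (n : nat) (u v : 'rV[R]_n) : R := \sum_(i < n) u ord0 i * v ord0 i.
Definition enorm (n : nat) (u : 'rV[R]_n) : R := Num.sqrt (dotv u u).

Definition frechet_normal (m : nat) (X : set 'rV[R]_m) (z v : 'rV[R]_m) : Prop :=
  X z /\
  forall eps : R, 0 < eps -> exists2 delta : R, 0 < delta &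
    forall z', X z' -> enorm (z' - z) < delta ->
      dotv v (z' - z) <= eps * enorm (z' - z).

Definition limiting_normal (m : nat) (X : set 'rV[R]_m) (z v : 'rV[R]_m) : Prop :=
  X z /\
  exists (zk vk : nat -> 'rV[R]_m),
    (forall k, frechet_normal X (zk k) (vk k)) /\
    zk @ \oo --> z /\ vk @ \oo --> v.

Definition grad (n : nat) (f : 'rV[R]_n -> R) (x : 'rV[R]_n) : 'rV[R]_n :=
  \row_j ('d f x (unitv j)).
Definition jac (n m : nat) (g : 'rV[R]_n -> 'rV[R]_m) (x : 'rV[R]_n) : 'M[R]_(m, n) :=
  \matrix_(i, j) ('d g x (unitv j)) ord0 i.

Definition C1 (n k : nat) (h : 'rV[R]_n -> 'rV[R]_k) : Prop :=
  (forall x, differentiable h x) /\ (forall v, continuous (fun x => 'd h x v)).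
Definition C1s (n : nat) (h : 'rV[R]_n -> R) : Prop :=
  (forall x, differentiable h x) /\ (forall v, continuous (fun x => 'd h x v)).

Definition convex_fun (q : R -> R) : Prop :=
  forall a b t : R, 0 <= t <= 1 -> q (t * a + (1 - t) * b) <= t * q a + (1 - t) * q b.
Definition P_conditions (rho : R) (q : R -> R) (s : R) : Prop :=
  [/\ convex_fun q /\ 0 < s /\ (forall t, q s <= q t) /\
                (forall t, (forall u, q t <= q u) -> t = s),
      q 0 - q s = rho
    & (forall t, derivable q t 1) /\ continuous (derive1 q)].

Definition psum (n : nat) (p : 'I_n -> R -> R) (y : 'rV[R]_n) : R :=
  \sum_(i < n) p i (y ord0 i).
Definition grad_p (n : nat) (p : 'I_n -> R -> R) (y : 'rV[R]_n) : 'rV[R]_n :=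
  \row_i (derive1 (p i) (y ord0 i)).

Definition absv (n : nat) (x : 'rV[R]_n) : 'rV[R]_n := \row_i `|x ord0 i|.

(* stationarity for (SPOref); gradient terms written as row vectors,
   so g'(x)^T lambda appears as lambda *m g'(x) *)
Definition SPOref_stationary (n m : nat) (f : 'rV[R]_n -> R)
    (g : 'rV[R]_n -> 'rV[R]_m) (X : set 'rV[R]_m) (p : 'I_n -> R -> R)
    (x y : 'rV[R]_n) : Prop :=
  [/\ X (g x), (forall i, x ord0 i * y ord0 i = 0), (forall i, 0 <= y ord0 i) &
   exists (lam : 'rV[R]_m) (gx gy nu : 'I_n -> R),
     [/\ limiting_normal X (g x) lam,
         (forall i, y ord0 i = 0 -> 0 <= nu i),
         0 = grad f x + lam *m jac g x
               + \sum_(i < n | x ord0 i == 0) (gx i * y ord0 i) *: unitv i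
       & 0 = grad_p p y
               + \sum_(i < n | y ord0 i == 0) (gy i * x ord0 i - nu i) *: unitv i]].

Definition Pen_stationary (n m : nat) (f : 'rV[R]_n -> R)
    (g : 'rV[R]_n -> 'rV[R]_m) (X : set 'rV[R]_m) (p : 'I_n -> R -> R)
    (alpha : R) (x y : 'rV[R]_n) : Prop :=
  [/\ X (g x), (forall i, 0 <= y ord0 i) &
   exists (lam : 'rV[R]_m) (gam : 'I_n -> R) (sg : 'rV[R]_n),
     [/\ limiting_normal X (g x) lam,
         (forall i, y ord0 i = 0 -> 0 <= gam i),
         (forall i, (x ord0 i != 0 -> sg ord0 i = Num.sg (x ord0 i)) /\
                    (x ord0 i = 0 -> -1 <= sg ord0 i <= 1)),
         0 = grad f x + alpha *: (\row_i (y ord0 i * sg ord0 i)) + lam *m jac g x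
       & 0 = grad_p p y + alpha *: absv x
               - \sum_(i < n | y ord0 i == 0) gam i *: unitv i]].

Definition SP_GMFCQ (n m : nat) (g : 'rV[R]_n -> 'rV[R]_m) (X : set 'rV[R]_m)
    (xs : 'rV[R]_n) : Prop :=
  X (g xs) /\
  forall (la : 'I_n -> R) (lb : 'rV[R]_m),
    limiting_normal X (g xs) lb ->
    \sum_(i < n | xs ord0 i == 0) la i *: unitv i + lb *m jac g xs = 0 ->
    (forall i, xs ord0 i = 0 -> la i = 0) /\ lb = 0.

End SPO.

(* SP-GMFCQ is stable: normalized multipliers form a compact set and the graph of the
   limiting normal cone is closed, so near xs there is c > 0 with
   c (|la| + |lb|) <= |la + lb g'(x)| whenever lb is a limiting normal to X at g x and
   la vanishes off I0(xs).  Convexity gives p_i'(0) < 0, hence ys_i > 0 on I0(xs).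
   Let (x, y) near (xs, ys) be stationary for Pen(alpha) with alpha large.  Off I0(xs),
   y_i <> 0 would give p_i'(y_i) = - alpha |x_i|, far below p_i'(ys_i); so y_i = 0 there.
   Then la = alpha (y o s) vanishes off I0(xs) and la + lam g'(x) = - grad f(x), so
   alpha y_i |s_i| stays bounded on I0(xs), where y_i > ys_i / 2; thus x_i = 0.  Hence
   x o y = 0, and the multipliers of Pen(alpha) are multipliers of (SPOref). *)

From HB Require Import structures.
From mathcomp Require Import all_boot all_order all_algebra.
From mathcomp Require Import all_classical all_reals all_analysis.
From mathcomp Require Import lra.
Set Implicit Arguments. Unset Strict Implicit. Unset Printing Implicit Defensive.
Import Order.TTheory GRing.Theory Num.Theory.
Import numFieldNormedType.Exports.
Local Open Scope classical_set_scope.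
Local Open Scope ring_scope.

Section ConvexSlope.
Variables (R : realType) (q : R -> R).
Hypothesis q_convex : convex_fun q.

Lemma convex_slope0_le h s : 0 < h -> h <= s -> (q h - q 0) / h <= (q s - q 0) / s.
Proof.
move=> h_gt0 hs; have s_gt0 : 0 < s by apply: lt_le_trans hs.
have t01 : 0 <= h / s <= 1 by rewrite divr_ge0 ?(ltW h_gt0) ?(ltW s_gt0) // ler_pdivrMr // mul1r.
have := q_convex s 0 t01; rewrite mulr0 addr0 mulfVK ?gt_eqF // => qh.
by rewrite ler_pdivrMr //; lra.
Qed.

Lemma derive1_le_slope0 s : derivable q 0 1 -> 0 < s -> derive1 q 0 <= (q s - q 0) / s.
Proof.
move=> dq s_gt0; rewrite derive1E /derive cvg_at_rightE //.
apply: limr_le; first by apply/cvg_ex; exists ('D_1 q 0); exact: cvg_dnbhs_at_right.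
near=> h; rewrite /= addr0 [h%:A]mulr1 [_ *: _]mulrC.
apply: convex_slope0_le; first by near: h; exact: nbhs_right_gt.
by near: h; apply: nbhs_right_le.
Unshelve. all: by end_near. Qed.

End ConvexSlope.

Lemma P_conditions_derive0_lt0 (R : realType) rho (q : R -> R) s :
  P_conditions rho q s -> 0 < rho -> derive1 q 0 < 0.
Proof.
move=> [[q_convex [s_gt0 _]] q0s [dq _]] rho_gt0.
apply: le_lt_trans (derive1_le_slope0 q_convex (dq 0) s_gt0) _.
by rewrite pmulr_llt0 ?invr_gt0 //; lra.
Qed.

Lemma cvg_natSinv (R : realType) (V : normedModType R) (u : nat -> V) l :
  (forall k, `|u k - l| < k.+1%:R^-1) -> u @ \oo --> l.
Proof.
move=> ul; apply/cvgrPdist_lt => e e_gt0; near=> k; rewrite distrC.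
apply: lt_trans (ul k) _; near: k; exact: near_infty_natSinv_lt (PosNum e_gt0).
Unshelve. all: by end_near. Qed.

Section RowVector.
Variables (R : realType) (k : nat).
Implicit Types v : 'rV[R]_k.

Lemma normr_coord_le v j : `|v ord0 j| <= `|v|.
Proof.
by rewrite [leRHS]/Num.Def.normr /= mx_normrE; apply/bigmax_geP; right; exists (ord0, j).
Qed.

Lemma normr_le_coord v b : 0 <= b -> (forall j, `|v ord0 j| <= b) -> `|v| <= b.
Proof.
move=> b_ge0 vb; rewrite [leLHS]/Num.Def.normr /= mx_normrE.
by apply: bigmax_le => // -[i j] _ /=; rewrite (ord1 i).
Qed.

Lemma sum_unitv_coord (P : pred 'I_k) (a : 'I_k -> R) j :
  (\sum_(i | P i) a i *: unitv R i) ord0 j = if P j then a j else 0.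
Proof.
rewrite summxE big_mkcond (bigD1 j) //= big1 ?addr0.
  by rewrite /unitv !mxE !eqxx /= mulr1; case: (P j).
move=> i /negbTE ij; case: (P i) => //.
by rewrite /unitv !mxE eqxx eq_sym ij mulr0.
Qed.

Lemma sum_coord_unitv v (P : pred 'I_k) :
  (forall i, ~~ P i -> v ord0 i = 0) -> \sum_(i | P i) v ord0 i *: unitv R i = v.
Proof.
move=> vP; apply/rowP => j; rewrite sum_unitv_coord.
by case: (boolP (P j)) => // /vP ->.
Qed.

Lemma cvg_row_coord T (F : set_system T) {FF : Filter F} (h : T -> 'rV[R]_k) v :
  (forall j, (fun t => h t ord0 j) @ F --> v ord0 j) -> h @ F --> v.
Proof.
move=> hv; apply/cvgrPdist_le => e e_gt0.
have : \forall t \near F, forall j, `|v ord0 j - h t ord0 j| <= e.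
  by apply: filter_forall => j; exact: (cvgrPdist_le _ _).1 (hv j) e e_gt0.
apply: filterS => t vh; apply: normr_le_coord (ltW e_gt0) _ => j.
by rewrite !mxE.
Qed.

Lemma closed_ball_compact (v : 'rV[R]_k) r : compact (closed_ball_ Num.Def.normr v r).
Proof.
apply: bounded_closed_compact; last exact: closed_closed_ball_.
exists (`|v| + r); split; first by rewrite num_real.
move=> M vrM w /= vw; apply: le_trans (ltW vrM).
rewrite -[w](subrKC v) (le_trans (ler_normD _ _)) // lerD2l.
by rewrite -normrN opprB.
Qed.

End RowVector.

Lemma grad_continuous (R : realType) n (f : 'rV[R]_n -> R) : C1s f -> continuous (grad f).
Proof.
move=> [_ df] x; apply: (cvg_row_coord (F := nbhs x)) => j.
have -> : (fun t => grad f t ord0 j) = fun t => 'd f t (unitv R j).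
  by apply: funext => t; rewrite mxE.
by rewrite mxE; exact: df.
Qed.

Section NormalCone.
Variables (R : realType) (m : nat) (X : set 'rV[R]_m).

Lemma dotvZl (c : R) (u v : 'rV[R]_m) : dotv (c *: u) v = c * dotv u v.
Proof. by rewrite /dotv mulr_sumr; apply: eq_bigr => i _; rewrite mxE mulrA. Qed.

Lemma frechet_normalZ z v c : 0 < c -> frechet_normal X z v -> frechet_normal X z (c *: v).
Proof.
move=> c_gt0 [Xz Nv]; split => // e e_gt0.
have [d d_gt0 dv] := Nv (e / c) (divr_gt0 e_gt0 c_gt0).
exists d => // z' Xz' zz'; rewrite dotvZl.
have := dv z' Xz' zz'; rewrite -(ler_pM2l c_gt0) => /le_trans; apply.
by rewrite mulrA mulrCA divff ?gt_eqF // mulr1.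
Qed.

Hypothesis X_closed : closed X.

Lemma limiting_normalP z v : limiting_normal X z v <->
  forall e, 0 < e -> exists z' v', [/\ frechet_normal X z' v', `|z' - z| < e & `|v' - v| < e].
Proof.
split=> [[_ [zk [vk [Nk [zkz vkv]]]]] e e_gt0 | approx].
  have [k _ /(_ k (leqnn k))] := filterI ((cvgrPdist_lt _ _).1 zkz e e_gt0)
                                          ((cvgrPdist_lt _ _).1 vkv e e_gt0).
  by move=> [zk_z vk_v]; exists (zk k), (vk k); rewrite distrC [`|vk k - _|]distrC.
split.
  apply: X_closed => B /nbhs_ballP [e e_gt0 eB].
  have [z' [v' [[Xz' _] zz' _]]] := approx e e_gt0.
  by exists z'; split => //; apply: eB; rewrite -ball_normE /= distrC.
have k_gt0 k : 0 < k.+1%:R^-1 :> R by rewrite invr_gt0.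
have [w wP] := choice (fun k => approx _ (k_gt0 k)).
have [w' w'P] := choice wP.
exists w, w'; split; first by move=> k; have [] := w'P k.
by split; apply: cvg_natSinv => k; have [] := w'P k.
Qed.

Lemma limiting_normalZ z v c : 0 < c -> limiting_normal X z v -> limiting_normal X z (c *: v).
Proof.
move=> c_gt0 /limiting_normalP approx; apply/limiting_normalP => e e_gt0.
have ec_gt0 : 0 < Num.min e (e / c) by rewrite lt_min e_gt0 divr_gt0.
have [z' [v' [Nv' zz' vv']]] := approx _ ec_gt0.
exists z', (c *: v'); split; first exact: frechet_normalZ.
  by apply: lt_le_trans zz' _; rewrite ge_min lexx.
rewrite -scalerBr normrZ gtr0_norm // mulrC -ltr_pdivlMr //.
by apply: lt_le_trans vv' _; rewrite ge_min lexx orbT.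
Qed.

Lemma closed_limiting_normal : closed [set zv | limiting_normal X zv.1 zv.2].
Proof.
move=> [z v] zv_cl; apply/limiting_normalP => e e_gt0.
have e2_gt0 : 0 < e / 2 by rewrite divr_gt0.
have [[z1 v1] [/= /limiting_normalP approx [/= zz1 vv1]]] :=
  zv_cl _ (nbhsx_ballx (z, v) _ e2_gt0).
have [z' [v' [Nv' z1z' v1v']]] := approx _ e2_gt0.
move: zz1 vv1; rewrite -!ball_normE /= => zz1 vv1.
exists z', v'; split => //; rewrite (splitr e).
  by rewrite (le_lt_trans (ler_distD z1 _ _)) // ltrD // distrC.
by rewrite (le_lt_trans (ler_distD v1 _ _)) // ltrD // distrC.
Qed.

End NormalCone.

Section ClusterPoint.
Context {I : Type} (F : set_system I) {FF : Filter F} {T : topologicalType}.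
Variables (w : I -> T) (p0 : T).
Hypothesis w_p0 : cluster (w @ F) p0.

Lemma cluster_closed (U : topologicalType) (h : T -> U) (A : set U) :
  {for p0, continuous h} -> closed A -> (\forall i \near F, A (h (w i))) -> A (h p0).
Proof.
move: w_p0; rewrite cluster_cvgE => -[G PG [Gp0 FG]] hc A_closed FA.
exact: (@closed_cvg _ _ G PG h A A_closed (FG _ FA) _ (cvg_trans (cvg_app h Gp0) hc)).
Qed.

Lemma cluster_cvg_eq (R : numFieldType) (V : normedModType R) (h : T -> V) l :
  {for p0, continuous h} -> h (w i) @[i --> F] --> l -> h p0 = l.
Proof.
move: w_p0; rewrite cluster_cvgE => -[G PG [Gp0 FG]] hc hl.
apply: (cvg_unique (@norm_hausdorff _ V) (F := h @ G)).
  exact: cvg_trans (cvg_app h Gp0) hc.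
exact: cvg_trans (cvg_app h FG) hl.
Qed.

End ClusterPoint.

Section UniformCQ.
Variables (R : realType) (n m : nat) (g : 'rV[R]_n -> 'rV[R]_m).
Variables (X : set 'rV[R]_m) (xs : 'rV[R]_n).
Hypotheses (g_C1 : C1 g) (X_closed : closed X) (gmfcq : SP_GMFCQ g X xs).

Lemma mul_jac_continuous : continuous (fun p : 'rV[R]_n * 'rV[R]_m => p.2 *m jac g p.1).
Proof.
move=> p; apply: (cvg_row_coord (F := nbhs p)) => j.
have jacE (q : 'rV[R]_n * 'rV[R]_m) :
    (q.2 *m jac g q.1) ord0 j = \sum_i q.2 ord0 i * ('d g (q.1) (unitv R j)) ord0 i.
  by rewrite !mxE; apply: eq_bigr => i _; rewrite !mxE.
have -> : (fun q : 'rV[R]_n * 'rV[R]_m => (q.2 *m jac g q.1) ord0 j) =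
          fun q => \sum_i q.2 ord0 i * ('d g (q.1) (unitv R j)) ord0 i.
  by apply: funext => q; exact: jacE.
rewrite jacE.
apply: cvg_big => [|i _]; first exact: add_continuous.
apply: cvgM.
  apply: (continuous_comp (f := snd) (g := fun v : 'rV[R]_m => v ord0 i)).
    exact: cvg_snd.
  exact: coord_continuous.
apply: (continuous_comp (f := fst) (g := fun x => ('d g x (unitv R j)) ord0 i)).
  exact: cvg_fst.
apply: (continuous_comp (f := fun x => 'd g x (unitv R j)) (g := fun v : 'rV[R]_m => v ord0 i)).
  exact: g_C1.2.
exact: coord_continuous.
Qed.

Local Notation triple := (('rV[R]_n * 'rV[R]_m) * 'rV[R]_n)%type.

(* A triple ((x, lb), la) carries the multipliers lambda^b and lambda^a of SP-GMFCQ at x. *)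
Let unit_multiplier (p : triple) :=
  [/\ limiting_normal X (g p.1.1) p.1.2, forall i, xs ord0 i != 0 -> p.2 ord0 i = 0
    & `|p.2| + `|p.1.2| = 1].

Let x_continuous (p : triple) : {for p, continuous (fun q : triple => q.1.1)}.
Proof. by apply: (continuous_comp (f := fst) (g := fst)); exact: cvg_fst. Qed.

Let lb_continuous (p : triple) : {for p, continuous (fun q : triple => q.1.2)}.
Proof.
by apply: (continuous_comp (f := fst) (g := snd)); [exact: cvg_fst | exact: cvg_snd].
Qed.

Lemma unit_multiplier_cluster I (F : set_system I) {FF : Filter F} (w : I -> triple) p0 :
  cluster (w @ F) p0 -> (\forall i \near F, unit_multiplier (w i)) -> unit_multiplier p0.
Proof.
move=> w_p0 Fw; split.
- have gN_continuous : continuous (fun p : triple => (g p.1.1, p.1.2)).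
    move=> p; apply: (@cvg_pair _ _ _ _ (nbhs (g p.1.1)) (nbhs p.1.2) _ _ _
                        (fun p => g p.1.1) (fun p => p.1.2)); last exact: lb_continuous.
    apply: (continuous_comp (f := fun p => p.1.1) (g := g)); first exact: x_continuous.
    exact: differentiable_continuous (g_C1.1 _).
  apply: (cluster_closed w_p0 (gN_continuous _) (closed_limiting_normal X_closed)).
  by apply: filterS Fw => i [].
- move=> i xs_i.
  have la_continuous : continuous (fun p : triple => p.2 ord0 i).
    move=> p; apply: (continuous_comp (f := snd) (g := fun v : 'rV[R]_n => v ord0 i)).
      exact: cvg_snd.
    exact: coord_continuous.
  apply: (cluster_closed w_p0 (la_continuous _) (@closed_eq _ 0)).
  by apply: filterS Fw => k [_ /(_ i xs_i)].
- have norms_continuous : continuous (fun p : triple => `|p.2| + `|p.1.2|).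
    move=> p; apply: cvgD.
      apply: (continuous_comp (f := snd) (g := fun v : 'rV[R]_n => `|v|)).
        exact: cvg_snd.
      exact: norm_continuous.
    apply: (continuous_comp (f := fun p => p.1.2) (g := fun v : 'rV[R]_m => `|v|)).
      exact: lb_continuous.
    exact: norm_continuous.
  apply: (cluster_closed w_p0 (norms_continuous _) (@closed_eq _ 1)).
  by apply: filterS Fw => k [].
Qed.

Lemma unit_multiplier_jac_neq0 lb la :
  unit_multiplier ((xs, lb), la) -> la + lb *m jac g xs != 0.
Proof.
move=> [/= Nlb la_supp norm1]; apply/eqP => phi0.
have [la_0 lb_0] : (forall i, xs ord0 i = 0 -> la ord0 i = 0) /\ lb = 0.
  by apply: gmfcq.2 Nlb _; rewrite sum_coord_unitv.
have la0 : la = 0.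
  apply/rowP => i; rewrite mxE.
  by have [/la_0 //|] := eqVneq (xs ord0 i) 0; exact: la_supp.
by move: norm1; rewrite /= la0 lb_0 !normr0 addr0 => /esym/eqP; rewrite oner_eq0.
Qed.

Lemma SP_GMFCQ_normalized_bound :
  exists2 d, 0 < d & exists2 c, 0 < c & forall p : triple,
    `|p.1.1 - xs| < d -> unit_multiplier p -> c <= `|p.2 + p.1.2 *m jac g p.1.1|.
Proof.
apply: contrapT => no_bound.
have bad k : exists w : triple, [/\ `|w.1.1 - xs| < k.+1%:R^-1, unit_multiplier w
                                  & `|w.2 + w.1.2 *m jac g w.1.1| < k.+1%:R^-1].
  apply: contrapT => no_w; apply: no_bound.
  have k_gt0 : 0 < k.+1%:R^-1 :> R by rewrite invr_gt0.
  exists k.+1%:R^-1 => //; exists k.+1%:R^-1 => // q qd Uq.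
  by rewrite leNgt; apply/negP => ?; apply: no_w; exists q.
have [w wP] := choice bad.
pose K := (closed_ball_ Num.Def.normr xs 1 `*` closed_ball_ Num.Def.normr (0 : 'rV[R]_m) 1)
            `*` closed_ball_ Num.Def.normr (0 : 'rV[R]_n) 1.
have K_compact : compact K by do 2?apply: compact_setX; exact: closed_ball_compact.
have wK : (w @ \oo) K.
  exists 0%N => // k _; have [wx [_ _ w1] _] := wP k.
  rewrite /K /closed_ball_ /= !sub0r !normrN distrC.
  split; [split|]; rewrite ?(ltW (lt_le_trans wx _)) ?invf_le1 ?ler1n //.
    by rewrite -w1 lerDr.
  by rewrite -w1 lerDl.
have [[[x0 lb0] la0] [_ w_p0]] := K_compact _ _ wK.
have x0E : x0 = xs.
  apply: (cluster_cvg_eq w_p0 (@x_continuous _)).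
  by apply: cvg_natSinv => k; have [] := wP k.
have : unit_multiplier ((x0, lb0), la0).
  by apply: (unit_multiplier_cluster w_p0); exists 0%N => // k _; have [] := wP k.
rewrite x0E => /unit_multiplier_jac_neq0/eqP; apply.
have phi_continuous : continuous (fun p : triple => p.2 + p.1.2 *m jac g p.1.1).
  move=> p; apply: cvgD; first exact: cvg_snd.
  apply: (continuous_comp (f := fst) (g := fun q : 'rV[R]_n * 'rV[R]_m => q.2 *m jac g q.1)).
    exact: cvg_fst.
  exact: mul_jac_continuous.
rewrite -x0E; apply: (cluster_cvg_eq w_p0 (phi_continuous _)).
by apply: cvg_natSinv => k; rewrite subr0; have [] := wP k.
Qed.

Lemma SP_GMFCQ_uniform :
  exists2 d, 0 < d & exists2 c, 0 < c & forall x (la : 'rV[R]_n) (lb : 'rV[R]_m),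
    `|x - xs| < d -> limiting_normal X (g x) lb ->
    (forall i, xs ord0 i != 0 -> la ord0 i = 0) ->
    c * (`|la| + `|lb|) <= `|la + lb *m jac g x|.
Proof.
have [d d_gt0 [c c_gt0 bound]] := SP_GMFCQ_normalized_bound.
exists d => //; exists c => // x la lb xd Nlb la_supp.
set t := `|la| + `|lb|; have [t_gt0 | ] := ltP 0 t; last first.
  by move=> t_le0; rewrite (@le_trans _ _ 0) ?pmulr_rle0.
have tV_gt0 : 0 < t^-1 by rewrite invr_gt0.
have := bound ((x, t^-1 *: lb), t^-1 *: la) xd.
rewrite /= -scalemxAl -scalerDr normrZ gtr0_norm // ler_pdivlMl // mulrC.
apply; split => /=.
- exact: limiting_normalZ.
- by move=> i /la_supp la_i; rewrite mxE la_i mulr0.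
- by rewrite !normrZ gtr0_norm // -mulrDr mulVf ?gt_eqF.
Qed.

End UniformCQ.

Lemma SPOref_stationary_ys_gt0 (R : realType) n m (f : 'rV[R]_n -> R) (g : 'rV[R]_n -> 'rV[R]_m)
    X rho (p : 'I_n -> R -> R) s xs ys :
  (forall i, P_conditions rho (p i) (s i)) -> 0 < rho ->
  SPOref_stationary f g X p xs ys -> forall i, xs ord0 i = 0 -> 0 < ys ord0 i.
Proof.
move=> Pp rho_gt0 [_ _ ys_ge0 [lam [gx [gy [nu [_ nu_ge0 _ eq2]]]]]] i xs_i.
rewrite lt_def ys_ge0 andbT; apply/eqP => ys_i.
move/rowP/(_ i): eq2; rewrite !mxE sum_unitv_coord ys_i xs_i eqxx mulr0 sub0r.
have := P_conditions_derive0_lt0 (Pp i) rho_gt0; have := nu_ge0 i ys_i; lra.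
Qed.

Section PenaltyStationary.
Variables (R : realType) (n m : nat) (f : 'rV[R]_n -> R) (g : 'rV[R]_n -> 'rV[R]_m).
Variables (X : set 'rV[R]_m) (p : 'I_n -> R -> R) (alpha : R) (x y : 'rV[R]_n).
Hypothesis pen : Pen_stationary f g X p alpha x y.

Lemma Pen_stationary_SPOref :
  (forall i, x ord0 i * y ord0 i = 0) -> SPOref_stationary f g X p x y.
Proof.
case: pen => Xgx y_ge0 [lam [gam [sg [Nlam gam_ge0 sgP eq1 eq2]]]] xy0.
have x_eq0 i : y ord0 i != 0 -> x ord0 i = 0.
  by move=> /negPf y_i; have /eqP := xy0 i; rewrite mulf_eq0 y_i orbF => /eqP.
split => //; exists lam, (fun i => alpha * sg ord0 i), (fun i => alpha * Num.sg (x ord0 i)), gam.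
split => //.
  apply/rowP => j; move/rowP/(_ j): eq1; rewrite !mxE sum_unitv_coord.
  have [x_j|] := eqVneq (x ord0 j) 0; first lra.
  move=> /negPf x_j; have /eqP := xy0 j; rewrite mulf_eq0 x_j => /eqP ->.
  by rewrite mul0r mulr0 !addr0.
apply/rowP => i; move/rowP/(_ i): eq2; rewrite !mxE !sum_unitv_coord.
have [y_i|/x_eq0 ->] := eqVneq (y ord0 i) 0; first by rewrite normrEsg; lra.
by rewrite normr0 mulr0 !subr0 addr0.
Qed.

Lemma Pen_stationary_y_eq0 i d0 :
  1 + `|d0| < alpha * `|x ord0 i| -> `|derive1 (p i) (y ord0 i) - d0| < 1 -> y ord0 i = 0.
Proof.
case: pen => _ _ [_ [gam [_ [_ _ _ _ eq2]]]] alpha_x.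
have [//|y_i] := eqVneq (y ord0 i) 0.
move/rowP/(_ i): eq2; rewrite !mxE sum_unitv_coord (negPf y_i) subr0 => eq2.
have -> : derive1 (p i) (y ord0 i) = - (alpha * `|x ord0 i|) by lra.
have := ler_norm (alpha * `|x ord0 i| + d0); have := ler_norm (- d0).
by rewrite -opprD !normrN; lra.
Qed.

Variables (xs : 'rV[R]_n) (d c b : R).
Hypothesis c_ge0 : 0 <= c.
Hypothesis cq : forall x (la : 'rV[R]_n) (lb : 'rV[R]_m),
  `|x - xs| < d -> limiting_normal X (g x) lb ->
  (forall i, xs ord0 i != 0 -> la ord0 i = 0) ->
  c * (`|la| + `|lb|) <= `|la + lb *m jac g x|.

Lemma Pen_stationary_complementary :
  `|x - xs| < d -> `|grad f x| <= b -> (forall i, xs ord0 i != 0 -> y ord0 i = 0) ->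
  (forall i, xs ord0 i = 0 -> b < c * alpha * y ord0 i) -> forall i, x ord0 i * y ord0 i = 0.
Proof.
case: pen => _ _ [lam [_ [sg [Nlam _ sgP eq1 _]]]] xd grad_b y_off y_on i.
have [xs_i|/y_off -> //] := eqVneq (xs ord0 i) 0; last by rewrite mulr0.
have [->|x_i] := eqVneq (x ord0 i) 0; first by rewrite mul0r.
pose la := alpha *: \row_j (y ord0 j * sg ord0 j).
have la_supp j : xs ord0 j != 0 -> la ord0 j = 0 by move=> /y_off y_j; rewrite !mxE y_j mul0r mulr0.
have la_lam : la + lam *m jac g x = - grad f x.
  by apply: (addrI (grad f x)); rewrite addrA -eq1 subrr.
have := cq xd Nlam la_supp; rewrite la_lam normrN => /le_trans/(_ grad_b) la_b.
have la_i : `|la ord0 i| = `|alpha| * `|y ord0 i|.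
  by rewrite !mxE (sgP i).1 // !normrM normr_sg x_i mulr1.
have : c * (alpha * y ord0 i) <= b.
  apply: le_trans la_b; apply: ler_wpM2l => //.
  apply: le_trans (ler_norm _) _; rewrite normrM -la_i.
  by apply: le_trans (normr_coord_le _ i) _; rewrite lerDl.
by have := y_on i xs_i; rewrite mulrA; lra.
Qed.

End PenaltyStationary.

Lemma exists_gt0_ub (R : realDomainType) (I : finType) (a : I -> R) :
  exists2 M, 0 < M & forall i, a i < M.
Proof.
have sum_ge0 : 0 <= \sum_i `|a i| by apply: sumr_ge0.
exists (1 + \sum_i `|a i|) => [|i]; first by rewrite ltr_pwDl.
apply: le_lt_trans (ler_norm _) _; rewrite (bigD1 i) //= ltr_pwDl //.
by rewrite lerDl sumr_ge0.
Qed.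

Lemma near_half_lt (R : realType) (T : topologicalType) (h : T -> R) t0 :
  {for t0, continuous h} -> 0 < h t0 -> \forall t \near t0, h t0 / 2 < h t.
Proof. by move=> hc h_gt0; apply: (cvgr_gt _ hc); rewrite ltr_pdivrMr // ltr_pMr // ltr1n. Qed.

Lemma near_penalty_bounds (R : realType) n (f : 'rV[R]_n -> R) (p : 'I_n -> R -> R)
    (xs ys : 'rV[R]_n) (d : R) :
  C1s f -> (forall i, continuous (derive1 (p i))) -> 0 < d ->
  nbhs (xs, ys) [set z : 'rV[R]_n * 'rV[R]_n |
    [/\ `|z.1 - xs| < d, `|grad f z.1| < `|grad f xs| + 1,
        forall i, xs ord0 i != 0 -> `|xs ord0 i| / 2 < `|z.1 ord0 i|,
        forall i, 0 < ys ord0 i -> ys ord0 i / 2 < z.2 ord0 i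
      & forall i, `|derive1 (p i) (z.2 ord0 i) - derive1 (p i) (ys ord0 i)| < 1]].
Proof.
move=> f_C1 dp_cont d_gt0.
have coord_cont k (v : 'rV[R]_k) i : {for v, continuous (fun w : 'rV[R]_k => w ord0 i)}.
  exact: coord_continuous.
have near_x : \forall x \near xs, [/\ `|x - xs| < d, `|grad f x| < `|grad f xs| + 1
                                  & forall i, xs ord0 i != 0 -> `|xs ord0 i| / 2 < `|x ord0 i|].
  near=> x; split.
  - near: x; apply: filterS (nbhsx_ballx xs _ d_gt0) => x.
    by rewrite -ball_normE /= distrC.
  - near: x; apply: (cvgr_lt (`|grad f xs|)); last by rewrite ltrDl.
    apply: (continuous_comp (f := grad f) (g := fun v : 'rV[R]_n => `|v|)).
      exact: grad_continuous.
    exact: norm_continuous.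
  - near: x; apply: filter_forall => i; have [_|xs_i] := eqVneq (xs ord0 i) 0.
      exact: nearW.
    have xs_pos : 0 < `|xs ord0 i| by rewrite normr_gt0.
    have hc : {for xs, continuous (fun x : 'rV[R]_n => `|x ord0 i|)}.
      apply: (continuous_comp (f := fun x : 'rV[R]_n => x ord0 i) (g := fun r : R => `|r|)).
        exact: coord_cont.
      exact: norm_continuous.
    by apply: filterS (near_half_lt hc xs_pos) => x ? _.
have near_y : \forall y \near ys,
    (forall i, 0 < ys ord0 i -> ys ord0 i / 2 < (y : 'rV[R]_n) ord0 i) /\
    forall i, `|derive1 (p i) (y ord0 i) - derive1 (p i) (ys ord0 i)| < 1.
  near=> y; split; near: y; apply: filter_forall => i.
    have [ys_i|_] := ltP 0 (ys ord0 i); last exact: nearW.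
    by apply: filterS (near_half_lt (coord_cont _ ys i) ys_i) => y ? _.
  have dpc : {for ys, continuous (fun y : 'rV[R]_n => derive1 (p i) (y ord0 i))}.
    apply: (continuous_comp (f := fun y : 'rV[R]_n => y ord0 i) (g := derive1 (p i))).
      exact: coord_cont.
    exact: dp_cont.
  by move/cvgr_dist_lt: dpc => /(_ _ ltr01); apply: filterS => y; rewrite distrC.
eexists (_, _); first by split; [exact: near_x | exact: near_y].
by move=> [x y] /= [[? ? ?] [? ?]]; split.
Unshelve. all: by end_near. Qed.

Theorem mainTheorem4 (R : realType) (n m : nat)
    (f : 'rV[R]_n -> R) (g : 'rV[R]_n -> 'rV[R]_m) (X : set 'rV[R]_m)
    (rho : R) (p : 'I_n -> R -> R) (s : 'I_n -> R) :
  C1s f -> C1 g -> X !=set0 -> closed X -> 0 < rho ->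
  (forall i, P_conditions rho (p i) (s i)) ->
  forall xs ys : 'rV[R]_n,
  SPOref_stationary f g X p xs ys ->
  SP_GMFCQ g X xs ->
  exists2 alphas : R, 0 < alphas &
  exists2 U : set ('rV[R]_n * 'rV[R]_n), nbhs (xs, ys) U &
    forall alpha : R, alphas <= alpha ->
    forall x y : 'rV[R]_n, U (x, y) ->
      Pen_stationary f g X p alpha x y -> SPOref_stationary f g X p x y.
Proof.
move=> f_C1 g_C1 _ X_closed rho_gt0 Pp xs ys st gmfcq.
have ys_gt0 := SPOref_stationary_ys_gt0 Pp rho_gt0 st.
have [d d_gt0 [c c_gt0 cq]] := SP_GMFCQ_uniform g_C1 X_closed gmfcq.
have dp_cont i : continuous (derive1 (p i)) by have [_ _ []] := Pp i.
pose b := `|grad f xs| + 1.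
(* a i bounds the alpha forcing x_i = 0 when xs_i = 0, resp. y_i = 0 when xs_i != 0. *)
pose a i := if xs ord0 i == 0 then b / (c * (ys ord0 i / 2))
            else (1 + `|derive1 (p i) (ys ord0 i)|) / (`|xs ord0 i| / 2).
have [alphas alphas_gt0 a_lt] := exists_gt0_ub a.
exists alphas => //.
econstructor; first exact: (near_penalty_bounds xs ys f_C1 dp_cont d_gt0).
move=> alpha le_alpha x y [xd grad_b x_far y_far dp_near] pen.
have a_lt_alpha i : a i < alpha := lt_le_trans (a_lt i) le_alpha.
have alpha_gt0 : 0 < alpha := lt_le_trans alphas_gt0 le_alpha.
apply: (Pen_stationary_SPOref pen).
apply: (Pen_stationary_complementary pen (ltW c_gt0) cq xd (ltW grad_b)) => i xs_i.
  apply: (Pen_stationary_y_eq0 pen _ (dp_near i)).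
  have := a_lt_alpha i; rewrite /a (negPf xs_i) ltr_pdivrMr ?divr_gt0 ?normr_gt0 //.
  by move/lt_le_trans; apply; rewrite ler_pM2l // ltW // x_far.
have := a_lt_alpha i; rewrite /a xs_i eqxx ltr_pdivrMr ?mulr_gt0 ?divr_gt0 ?ys_gt0 //.
by move/lt_le_trans; apply; rewrite mulrCA -mulrA !ler_pM2l // ltW // y_far ?ys_gt0.
Qed.
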